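(* Let $G$ be a commutative group, $g\in\mathrm{Aut}(G)$ with $g\ne\mathrm{id}$, and $t\in G$. Let $f$ be the bijection of $G$ given by $f(x)=g(x)t$. Then $Z(G(f))=Z(G(g))$ as sets, and $Z(G(g))=\{x\in G:\ g(x)=x\}$.
   Context: The center $Z(Q)$ of a loop $Q$ is the set of elements that commute with all elements and lie in the left, middle and right nuclei (i.e., associate in every position). Construction $G(f)$: for a commutative group $G$ (written multiplicatively) and a bijection $f:G\to G$, let $\overline{G}=\{\overline{x}:x\in G\}$ be a disjoint copy of $G$, and let $G(f)$ be $G\cup\overline{G}$ with multiplication $x*y=xy$, $x*\overline{y}=\overline{xy}$, $\overline{x}*y=\overline{xy}$, $\overline{x}*\overline{y}=f(xy)$ for $x,y\in G$. *)

(* The commutative group G is an abelian group written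
   additively: a zmodType V (identity 0, product +). *)
From HB Require Import structures.
From mathcomp Require Import all_boot all_order all_algebra.
Set Implicit Arguments. Unset Strict Implicit. Unset Printing Implicit Defensive.
Import GRing.Theory.
Local Open Scope ring_scope.

(* The construction G(f): carrier V + V, where inl x = x and inr x = \overline{x}.
   x*y = xy, x*ybar = (xy)bar, xbar*y = (xy)bar, xbar*ybar = f(xy). *)
Definition Gf_mul (V : zmodType) (f : V -> V) (a b : V + V) : V + V :=
  match a, b with
  | inl x, inl y => inl (x + y)
  | inl x, inr y => inr (x + y)
  | inr x, inl y => inr (x + y)
  | inr x, inr y => inl (f (x + y))
  end.

Definition in_center (Q : Type) (mul : Q -> Q -> Q) (z : Q) : Prop :=
  (forall x, mul z x = mul x z) /\
  (forall x y, mul (mul z x) y = mul z (mul x y)) /\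
  (forall x y, mul (mul x z) y = mul x (mul z y)) /\
  (forall x y, mul (mul x y) z = mul x (mul y z)).

(* Three facts about an arbitrary map f : V -> V come first:
   - inl a is central in G(f) as soon as f commutes with translation by a;
   - conversely, if inl a is central then f a = a + f 0 (associate
     inl a * (inr 0 * inr 0) with (inl a * inr 0) * inr 0);
   - if some inr a is central then f is a translation, f v = v + f 0
     (associate inr a, inr 0 and inr v).
   For f x = g x + c with g additive, the first two facts say that inl a is
   central iff g a = a, and the third that an inr element can only be
   central when g = id.  Hence for g <> id the centre of G(f) is
   {inl x | g x = x} whatever c is; the theorem is this description taken
   at c = t and at c = 0 (where f = g). *)

From HB Require Import structures.
From mathcomp Require Import all_boot all_order all_algebra.
From Stdlib Require Import FunctionalExtensionality.
Import GRing.Theory.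
Local Open Scope ring_scope.

Section CentreOfGf.

Variables (V : zmodType) (f : V -> V).

Lemma inl_central (a : V) :
  (forall w, f (a + w) = a + f w) -> in_center (Gf_mul f) (inl a).
Proof.
move=> fa.
have fa' w : f (w + a) = f w + a by rewrite addrC fa addrC.
split; [|split; [|split]].
- by case=> x /=; rewrite addrC.
- by case=> x [] y /=; rewrite ?addrA // -fa addrA.
- by case=> x [] y /=; rewrite ?addrA.
- by case=> x [] y /=; rewrite ?addrA // fa'.
Qed.

(* Left nuclearity of inl a on (inr 0, inr 0) forces f a = a + f 0. *)
Lemma inl_central_shift (a : V) :
  in_center (Gf_mul f) (inl a) -> f a = a + f 0.
Proof.
by case=> _ [assoc _]; have := assoc (inr 0) (inr 0); rewrite /= !addr0 => -[].
Qed.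

(* A central inr a forces f to be a translation: left nuclearity on
   (inr 0, inr v) gives f a + v = a + f v for every v. *)
Lemma inr_central_translation (a : V) :
  in_center (Gf_mul f) (inr a) -> forall v, f v = v + f 0.
Proof.
case=> _ [assoc _].
have shift v : f a + v = a + f v.
  by have := assoc (inr 0) (inr v); rewrite /= !addr0 add0r => -[].
have fa : f a = a + f 0 by rewrite -[f a]addr0 shift.
by move=> v; apply: (addrI a); rewrite -shift fa -addrA (addrC (f 0)).
Qed.

End CentreOfGf.

Lemma affine_center (V : zmodType) (g f : V -> V) (c : V)
  (g_add : {morph g : x y / x + y}) (g_nid : g <> id)
  (f_affine : forall x, f x = g x + c) (z : V + V) :
  in_center (Gf_mul f) z <-> exists2 x : V, z = inl x & g x = x.
Proof.
have g0 : g 0 = 0 by apply: (addrI (g 0)); rewrite -g_add !addr0.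
split.
- case: z => a central.
  + exists a => //; apply: (addIr c).
    by rewrite -f_affine inl_central_shift // f_affine g0 add0r.
  + case: g_nid; apply: functional_extensionality => v; apply: (addIr c).
    by rewrite -f_affine (inr_central_translation _ _ _ central v) f_affine g0 add0r.
- case=> a -> ga; apply: inl_central => w.
  by rewrite !f_affine g_add ga addrA.
Qed.

Theorem lemma3p1 (V : zmodType) (g : V -> V)
  (g_add : {morph g : x y / x + y}) (g_bij : bijective g)
  (g_nid : g <> id) (t : V) :
  (forall z : V + V,
     in_center (Gf_mul (fun x => g x + t)) z <-> in_center (Gf_mul g) z) /\
  (forall z : V + V,
     in_center (Gf_mul g) z <-> exists2 x : V, z = inl x & g x = x).
Proof.
have center_g z : in_center (Gf_mul g) z <-> exists2 x : V, z = inl x & g x = x.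
  by apply: (@affine_center V g g 0) => // x; rewrite addr0.
split=> // z; apply: iff_trans (iff_sym (center_g z)).
exact: affine_center.
Qed.
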